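(* Assume the linear model $X_a=X^a\theta^0_a+\epsilon_a$. On the event $\Lambda_a$, if $\lambda\ge2\lambda_0$ and $\mu\ge2\mu_0$, then $$\frac2n\|X^a(\hat\theta^{\lambda,\mu}_a-\theta^0_a)\|_2^2+(\lambda-3B\mu)\|\hat\theta^{\lambda,\mu}_{a,S_0^c}\|_1\le(3\lambda+5B\mu)\|\hat\theta^{\lambda,\mu}_{a,S_0}-\theta^0_{a,S_0}\|_1.$$
   Context: Fix a node $a$. $X_a\in\mathbb{R}^n$ is the observed $a$-th variable, $X^a$ the $n\times p$ observation matrix with $a$-th column set to zero, $X^a_j$ its $j$-th column, $\theta^0_a$ the true coefficient vector, $\epsilon_a$ the noise. $S_0=\{j:\theta^0_{a,j}\neq0\}$. For $S\subseteq\{1,\dots,p\}$ and $\theta\in\mathbb{R}^p$, $\theta_S$ is the vector with entries $\theta_j\mathbf{1}\{j\in S\}$, and $\theta_{S^c}$ has entries $\theta_j\mathbf{1}\{j\notin S\}$. The local difference matrix $D^a$: from a known local neighborhood graph with edge set $E_{\rm local}$, $D$ has a row $e_i-e_j$ per edge $\{i,j\}$, $i<j$, and $D^a$ keeps rows with $a$-th entry $0$. $B$ bounds the number of nonzero entries in any column of $D^a$. $\hat\theta^{\lambda,\mu}_a=\operatorname{argmin}_{\theta_a}\big[\frac1n\|X_a-X^a\theta_a\|_2^2+\lambda\|\theta_a\|_1+\mu\|D^a\theta_a\|_1\big]$. For $\lambda_0,\mu_0>0$, $\Lambda_a:=\{\max_{j\neq a}\frac2n|\epsilon_a'X^a_j|\le\lambda_0+B\mu_0\}$.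 *)

From HB Require Import structures.
From mathcomp Require Import all_boot all_order all_algebra.
Set Implicit Arguments. Unset Strict Implicit. Unset Printing Implicit Defensive.
Import Order.TTheory GRing.Theory Num.Theory.
Local Open Scope ring_scope.

Section Defs.
Variable R : realFieldType.

Definition norm1 (m : nat) (v : 'cV[R]_m) : R := \sum_(i < m) `|v i 0|.
Definition norm2sq (m : nat) (v : 'cV[R]_m) : R := \sum_(i < m) (v i 0) ^+ 2.

Definition restr (p : nat) (S : {set 'I_p}) (v : 'cV[R]_p) : 'cV[R]_p :=
  \col_j (if j \in S then v j 0 else 0).

Definition supp (p : nat) (v : 'cV[R]_p) : {set 'I_p} := [set j | v j 0 != 0].

Definition Xminus (n p : nat) (X : 'M[R]_(n, p)) (a : 'I_p) : 'M[R]_(n, p) :=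
  \matrix_(i, j) (if j == a then 0 else X i j).

(* Rows of D^a: edges {i,j} (i<j) of the local graph E whose row e_i - e_j
   has a-th entry 0, i.e. i <> a and j <> a.  A row is indexed by the pair (i,j). *)
Definition edges_a (p : nat) (E : rel 'I_p) (a : 'I_p) : {set 'I_p * 'I_p} :=
  [set ij : 'I_p * 'I_p | [&& (ij.1 < ij.2)%N, E ij.1 ij.2, ij.1 != a & ij.2 != a]].

Definition Dentry (p : nat) (ij : 'I_p * 'I_p) (k : 'I_p) : R :=
  (k == ij.1)%:R - (k == ij.2)%:R.

Definition Dnorm1 (p : nat) (E : rel 'I_p) (a : 'I_p) (v : 'cV[R]_p) : R :=
  \sum_(ij in edges_a E a) `| \sum_(k < p) Dentry ij k * v k 0 |.

Definition objective (n p : nat) (X : 'M[R]_(n, p)) (a : 'I_p) (E : rel 'I_p)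
  (lam mu : R) (th : 'cV[R]_p) : R :=
  n%:R^-1 * norm2sq (col a X - Xminus X a *m th)
  + lam * norm1 th + mu * Dnorm1 E a th.

End Defs.

From HB Require Import structures.
From mathcomp Require Import all_boot all_order all_algebra.
From mathcomp Require Import ring lra.
Set Implicit Arguments. Unset Strict Implicit.
Import Order.TTheory GRing.Theory Num.Theory.
Local Open Scope ring_scope.

(* Comparing the objective at thetahat with its value at theta0 gives the basic
   inequality: with d = thetahat - theta0, (1/n) ||X^a d||^2 plus the penalties
   at thetahat is at most the empirical process 2/n <eps, X^a d> plus the
   penalties at theta0.  On Lambda_a the empirical process is at most
   (lambda + B mu)/2 ||d||_1; the fused penalty is B-Lipschitz for ||.||_1,
   since every column of D^a has at most B entries of modulus at most 1; and
   splitting ||.||_1 along S_0 bounds the lasso penalty difference by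
   lambda (||d_{S_0}||_1 - ||thetahat_{S_0^c}||_1).  Collecting terms even gives
   3 B mu in place of 5 B mu on the right. *)

Section Norms.
Variable R : realFieldType.

Lemma norm2sqB m (u v : 'cV[R]_m) :
  norm2sq (u - v) = norm2sq u - 2 * \sum_i u i 0 * v i 0 + norm2sq v.
Proof.
rewrite /norm2sq mulr_sumr -sumrN -!big_split /=; apply: eq_bigr => i _.
by rewrite !mxE; ring.
Qed.

Lemma norm1_ge0 m (v : 'cV[R]_m) : 0 <= norm1 v.
Proof. by apply: sumr_ge0 => i _; apply: normr_ge0. Qed.

Lemma norm1_restr_supp p (th t0 : 'cV[R]_p) :
  norm1 (th - t0) = norm1 (restr (supp t0) th - restr (supp t0) t0)
                    + norm1 (restr (~: supp t0) th).
Proof.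
rewrite /norm1 -big_split; apply: eq_bigr => k _ /=; rewrite !mxE in_setC.
case: (boolP (k \in supp t0)) => [_|]; first by rewrite normr0 addr0.
by rewrite inE negbK => /eqP ->; rewrite subrr normr0 add0r subr0.
Qed.

Lemma norm1_restr_supp_le p (th t0 : 'cV[R]_p) :
  norm1 t0 + norm1 (restr (~: supp t0) th) <=
  norm1 th + norm1 (restr (supp t0) th - restr (supp t0) t0).
Proof.
rewrite /norm1 -!big_split; apply: ler_sum => k _ /=; rewrite !mxE in_setC.
case: (boolP (k \in supp t0)) => [_|] /=.
  rewrite normr0 addr0; have := ler_distD (th k 0) 0 (t0 k 0).
  by rewrite !sub0r !normrN.
by rewrite inE negbK => /eqP ->; rewrite subrr !normr0 add0r addr0.
Qed.

Lemma noise_term_le n p (Z : 'M[R]_(n, p)) (a : 'I_p) (eps : 'cV[R]_n)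
    (d : 'cV[R]_p) (c K : R) :
  (forall i, Z i a = 0) -> 0 <= c -> 0 <= K ->
  (forall j, j != a -> c * `|\sum_(i < n) eps i 0 * Z i j| <= K) ->
  c * `|\sum_i eps i 0 * (Z *m d) i 0| <= K * norm1 d.
Proof.
move=> Za c0 K0 HK.
have -> : \sum_i eps i 0 * (Z *m d) i 0 = \sum_j d j 0 * \sum_i eps i 0 * Z i j.
  under eq_bigr do rewrite mxE big_distrr /=.
  rewrite exchange_big; apply: eq_bigr => j _; rewrite big_distrr.
  by apply: eq_bigr => i _ /=; ring.
apply: le_trans (ler_wpM2l c0 (ler_norm_sum _ _ _)) _.
rewrite /norm1 !mulr_sumr; apply: ler_sum => j _.
rewrite normrM mulrCA mulrC; apply: ler_wpM2r; first exact: normr_ge0.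
have [->|/HK //] := eqVneq j a.
by rewrite big1 ?normr0 ?mulr0 // => i _; rewrite Za mulr0.
Qed.

End Norms.

Section FusedPenalty.
Variables (R : realFieldType) (p : nat) (E : rel 'I_p) (a : 'I_p).

Lemma Dentry_norm_le1 (ij : 'I_p * 'I_p) k : `|Dentry R ij k| <= 1.
Proof.
by rewrite /Dentry; case: (k == ij.1); case: (k == ij.2);
  rewrite /= ?subrr ?subr0 ?sub0r ?normrN ?normr1 ?normr0.
Qed.

Lemma Dnorm1_le_norm1 (B : nat) (v : 'cV[R]_p) :
  (forall k, (#|[set ij in edges_a E a | Dentry R ij k != 0%R]| <= B)%N) ->
  Dnorm1 E a v <= B%:R * norm1 v.
Proof.
move=> HB; rewrite /Dnorm1; set e := edges_a E a in HB *; clearbody e.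
apply: (@le_trans _ _ (\sum_(ij in e) \sum_k `|Dentry R ij k| * `|v k 0|)).
  apply: ler_sum => ij _; apply: le_trans (ler_norm_sum _ _ _) _.
  by apply: ler_sum => k _; rewrite normrM.
rewrite exchange_big /norm1 mulr_sumr; apply: ler_sum => k _.
rewrite -mulr_suml; apply: (ler_wpM2r (normr_ge0 (v k 0))).
apply: (@le_trans _ _ (\sum_(ij in [set ij in e | Dentry R ij k != 0]) 1)).
  rewrite big_mkcond [X in _ <= X]big_mkcond /=; apply: ler_sum => ij _.
  rewrite inE; case: (ij \in e) => //=.
  have [->|_] /= := eqVneq (Dentry R ij k) 0; first by rewrite normr0.
  exact: Dentry_norm_le1.
by rewrite sumr_const ler_nat.
Qed.

Lemma Dnorm1_triangle (u w : 'cV[R]_p) :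
  Dnorm1 E a u <= Dnorm1 E a w + Dnorm1 E a (u - w).
Proof.
rewrite /Dnorm1 -big_split; apply: ler_sum => ij _ /=.
have -> : \sum_k Dentry R ij k * u k 0 =
    \sum_k Dentry R ij k * w k 0 + \sum_k Dentry R ij k * (u - w) k 0.
  by rewrite -big_split; apply: eq_bigr => k _ /=; rewrite !mxE; ring.
exact: ler_normD.
Qed.

Lemma Dnorm1_Lipschitz (B : nat) (u w : 'cV[R]_p) :
  (forall k, (#|[set ij in edges_a E a | Dentry R ij k != 0%R]| <= B)%N) ->
  Dnorm1 E a u - Dnorm1 E a w <= B%:R * norm1 (w - u).
Proof.
have sym : norm1 (u - w) = norm1 (w - u).
  by apply: eq_bigr => k _; rewrite !mxE distrC.
move=> HB; have := Dnorm1_le_norm1 (u - w) HB; rewrite sym.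
by have := Dnorm1_triangle u w; lra.
Qed.

End FusedPenalty.

Lemma lasso_basic_inequality (R : realFieldType) n p (X : 'M[R]_(n, p)) a E
    (lam mu : R) (theta0 thetahat : 'cV[R]_p) (eps : 'cV[R]_n) :
  col a X = Xminus X a *m theta0 + eps ->
  objective X a E lam mu thetahat <= objective X a E lam mu theta0 ->
  let d := thetahat - theta0 in
  n%:R^-1 * norm2sq (Xminus X a *m d) + lam * norm1 thetahat
    + mu * Dnorm1 E a thetahat
  <= 2 * n%:R^-1 * \sum_i eps i 0 * (Xminus X a *m d) i 0
    + lam * norm1 theta0 + mu * Dnorm1 E a theta0.
Proof.
move=> model.
have res0 : col a X - Xminus X a *m theta0 = eps.
  by rewrite model [_ + eps]addrC addrK.
have res : col a X - Xminus X a *m thetahat = eps - Xminus X a *m (thetahat - theta0).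
  by rewrite -res0 mulmxBr opprB addrA addrNK.
by rewrite /objective /= res res0 norm2sqB; set N := n%:R^-1; lra.
Qed.

Theorem mainTheorem12 (R : realFieldType) (n p : nat) (X : 'M[R]_(n, p)) (a : 'I_p)
  (E : rel 'I_p) (B : nat) (theta0 : 'cV[R]_p) (eps : 'cV[R]_n)
  (lam0 mu0 lam mu : R) (thetahat : 'cV[R]_p) :
  (0 < n)%N ->
  (forall i j, E i j = E j i) ->
  (forall k : 'I_p, (#|[set ij in edges_a E a | Dentry R ij k != (0 : R)%R]| <= B)%N) ->
  col a X = Xminus X a *m theta0 + eps ->
  0 < lam0 -> 0 < mu0 ->
  (forall j : 'I_p, j != a ->
     2 / n%:R * `| \sum_(i < n) eps i 0 * Xminus X a i j | <= lam0 + B%:R * mu0) ->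
  lam >= 2 * lam0 -> mu >= 2 * mu0 ->
  (forall th : 'cV[R]_p, objective X a E lam mu thetahat <= objective X a E lam mu th) ->
  2 / n%:R * norm2sq (Xminus X a *m (thetahat - theta0))
  + (lam - 3 * B%:R * mu) * norm1 (restr (~: supp theta0) thetahat)
  <= (3 * lam + 5 * B%:R * mu)
     * norm1 (restr (supp theta0) thetahat - restr (supp theta0) theta0).
Proof.
move=> n_gt0 _ HB model lam0_gt0 mu0_gt0 Lambda lam_ge mu_ge minimiser.
have Za i : Xminus X a i a = 0 by rewrite mxE eqxx.
have c_ge0 : 0 <= 2 / n%:R :> R by rewrite divr_ge0 ?ler0n.
have K_ge0 : 0 <= lam0 + B%:R * mu0 by rewrite addr_ge0 ?mulr_ge0 ?ler0n ?ltW.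
have basic := lasso_basic_inequality model (minimiser theta0).
have noise := noise_term_le (thetahat - theta0) Za c_ge0 K_ge0 Lambda.
have fused := Dnorm1_Lipschitz theta0 thetahat HB.
have lasso := norm1_restr_supp_le thetahat theta0.
rewrite norm1_restr_supp in noise fused; move: basic noise fused lasso => /=.
set N := n%:R^-1; set dot := \sum_i _; set s := norm1 (_ - _).
set t := norm1 (restr _ _); set b := B%:R => basic noise fused lasso.
have dot_le : N * dot <= N * `|dot| by rewrite ler_wpM2l ?invr_ge0 ?ler0n ?ler_norm.
have [s_ge0 t_ge0 b_ge0] : [/\ 0 <= s, 0 <= t & 0 <= b] by rewrite !norm1_ge0 ler0n.
have [lam_ge0 mu_ge0] : 0 <= lam /\ 0 <= mu by split; lra.
have mu_fused := ler_wpM2l mu_ge0 fused.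
have lam_lasso := ler_wpM2l lam_ge0 lasso.
have lam_slack : 0 <= (lam - 2 * lam0) * (s + t) by rewrite mulr_ge0 ?subr_ge0 ?addr_ge0.
have mu_slack : 0 <= b * (mu - 2 * mu0) * (s + t).
  by rewrite !mulr_ge0 ?subr_ge0 ?addr_ge0.
have mu_s : 0 <= b * mu * s by rewrite !mulr_ge0.
lra.
Qed.
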